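(* Let $(b,c)$ be a weighted graph over $V$ with $n(x)>0$ for all $x\in V$, and let $Q=Q_{b,c,n}$ be the associated form on $\ell^2(V,n)$. Then for all $u\in D(Q)$ $$\Big(1-\sqrt{1-\alpha_{b,c,n}^2}\Big)\|u\|_n^2\le Q(u)\le\Big(1+\sqrt{1-\alpha_{b,c,n}^2}\Big)\|u\|_n^2,$$ where $\alpha_{b,c,n}=\alpha_{b,c,n}(V)$.
   Context: Let $V$ be a countably infinite set. A weighted graph over $V$ is a pair $(b,c)$ of maps $b:V\times V\to[0,\infty)$ and $c:V\to[0,\infty)$ with $b(x,x)=0$, $b(x,y)=b(y,x)$ and $\sum_{y\in V}b(x,y)<\infty$ for all $x,y\in V$. Let $n(x)=\sum_y b(x,y)+c(x)$ and $\|u\|_n^2=\sum_x n(x)u(x)^2$. Define $Q^{\max}(u)=\frac12\sum_{x,y}b(x,y)(u(x)-u(y))^2+\sum_x c(x)u(x)^2$; $Q_{b,c,n}$ is the closure in $\ell^2(V,n)$ of the restriction of $Q^{\max}$ to finitely supported functions. For finite $W$ let $|\partial W|=\sum_{x\in W,y\notin W}b(x,y)+\sum_{x\in W}c(x)$, $n(W)=\sum_{x\in W}n(x)$, and $\alpha_{b,c,n}(U)=\inf\{|\partial W|/n(W):\ W\subseteq U\text{ finite, nonempty}\}$. *)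

From Stdlib Require Import Reals Lra List Classical ClassicalEpsilon.
Open Scope R_scope.

Section Sums.
Context {T : Type}.

Definition fsum (l : list T) (f : T -> R) : R :=
  fold_right (fun x acc => f x + acc) 0 l.

Definition psums (f : T -> R) : R -> Prop :=
  fun s => exists l : list T, NoDup l /\ s = fsum l f.

Definition summable (f : T -> R) : Prop :=
  exists M : R, forall l : list T, NoDup l -> fsum l f <= M.

(* sum of a nonnegative family = sup of finite partial sums
   (meaningful when the family is summable) *)
Definition tsum (f : T -> R) : R :=
  epsilon (inhabits 0) (fun s => is_lub (psums f) s).

Definition fin_supp (u : T -> R) : Prop :=
  exists l : list T, forall x, ~ In x l -> u x = 0.
End Sums.

Definition countably_infinite (V : Type) : Prop :=
  exists e : nat -> V, (forall i j, e i = e j -> i = j) /\ (forall x, exists i, e i = x).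

Definition is_weighted_graph {V : Type} (b : V -> V -> R) (c : V -> R) : Prop :=
  (forall x y, 0 <= b x y) /\ (forall x, 0 <= c x) /\
  (forall x, b x x = 0) /\ (forall x y, b x y = b y x) /\
  (forall x, summable (b x)).

Definition nw {V : Type} (b : V -> V -> R) (c : V -> R) (x : V) : R :=
  tsum (b x) + c x.

Definition nrm2 {V : Type} (n : V -> R) (u : V -> R) : R :=
  tsum (fun x => n x * (u x) ^ 2).

Definition in_l2 {V : Type} (n : V -> R) (u : V -> R) : Prop :=
  summable (fun x => n x * (u x) ^ 2).

Definition Qmax {V : Type} (b : V -> V -> R) (c : V -> R) (u : V -> R) : R :=
  / 2 * tsum (fun p : V * V => b (fst p) (snd p) * (u (fst p) - u (snd p)) ^ 2)
  + tsum (fun x => c x * (u x) ^ 2).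

(* |dW| for a finite set W given as a duplicate-free list *)
Definition bdry {V : Type} (b : V -> V -> R) (c : V -> R) (W : list V) : R :=
  fsum W (fun x => tsum (fun y => b x y * (if excluded_middle_informative (In y W) then 0 else 1)))
  + fsum W c.

Definition nW {V : Type} (n : V -> R) (W : list V) : R := fsum W n.

Definition ratios {V : Type} (b : V -> V -> R) (c : V -> R) (U : V -> Prop) : R -> Prop :=
  fun r => exists W : list V, NoDup W /\ W <> nil /\ (forall x, In x W -> U x) /\
    r = bdry b c W / nW (nw b c) W.

(* alpha_{b,c,n}(U) = infimum of the ratios (as minus the sup of their negatives) *)
Definition alpha {V : Type} (b : V -> V -> R) (c : V -> R) (U : V -> Prop) : R :=
  - epsilon (inhabits 0) (fun s => is_lub (fun r => ratios b c U (- r)) s).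

(* u in D(Q_{b,c,n}) with Q_{b,c,n}(u) = q : u is in l^2(V,n) and there are finitely
   supported u_k with u_k -> u in l^2(V,n), (u_k) Q^max-Cauchy, and Q^max(u_k) -> q.
   (This is the closure of Q^max restricted to finitely supported functions.) *)
Definition QDom_val {V : Type} (b : V -> V -> R) (c : V -> R) (u : V -> R) (q : R) : Prop :=
  in_l2 (nw b c) u /\
  exists uk : nat -> V -> R,
    (forall k, fin_supp (uk k)) /\
    Un_cv (fun k => nrm2 (nw b c) (fun x => uk k x - u x)) 0 /\
    (forall eps, eps > 0 -> exists N, forall k l, (k >= N)%nat -> (l >= N)%nat ->
        Qmax b c (fun x => uk k x - uk l x) < eps) /\
    Un_cv (fun k => Qmax b c (uk k)) q.

(* For finitely supported f with support L, the co-area formula applied to f^2 gives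
   alpha ||f||^2 <= 1/2 sum_{x,y in L} b(x,y) |f(x)^2 - f(y)^2| + sum_{x in L} c'(x) f(x)^2,
   where c' is c plus the weight of the edges leaving L.  Writing
   |f(x)^2 - f(y)^2| = |f(x) - f(y)| |f(x) + f(y)|, Cauchy-Schwarz bounds the right-hand side
   by sqrt (Q(f) Q'(f)), where Q' is Q with f(x) + f(y) in place of f(x) - f(y); since
   Q(f) + Q'(f) = 2 ||f||^2, this gives Q(f) (2 ||f||^2 - Q(f)) >= alpha^2 ||f||^4, which
   confines Q(f) between the roots (1 -+ sqrt (1 - alpha^2)) ||f||^2.  Along the finitely
   supported sequence defining an element of D(Q) both ||.||^2 and Q converge, so the bounds
   pass to the limit. *)

From Stdlib Require Import Reals Lra Lia List Classical ClassicalEpsilon FunctionalExtensionality.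
Open Scope R_scope.

Local Notation em := excluded_middle_informative.

Section FiniteSums.
Context {T : Type}.
Implicit Types (l : list T) (f g : T -> R).

Lemma fsum_cons a l f : fsum (a :: l) f = f a + fsum l f.
Proof. reflexivity. Qed.

Lemma fsum_app l1 l2 f : fsum (l1 ++ l2) f = fsum l1 f + fsum l2 f.
Proof. induction l1; simpl; [lra|]. rewrite IHl1; lra. Qed.

Lemma fsum_ext l f g : (forall x, In x l -> f x = g x) -> fsum l f = fsum l g.
Proof.
  induction l as [|a l IH]; intros H; [reflexivity|].
  rewrite !fsum_cons, H, IH; auto with datatypes.
Qed.

Lemma fsum_plus l f g : fsum l (fun x => f x + g x) = fsum l f + fsum l g.
Proof. induction l; simpl; [lra|]. rewrite IHl; lra. Qed.

Lemma fsum_scal l a f : fsum l (fun x => a * f x) = a * fsum l f.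
Proof. induction l; simpl; [lra|]. rewrite IHl; lra. Qed.

Lemma fsum_zero l : fsum l (fun _ => 0) = 0.
Proof. induction l; simpl; [lra|]. rewrite IHl; lra. Qed.

Lemma fsum_le l f g : (forall x, In x l -> f x <= g x) -> fsum l f <= fsum l g.
Proof.
  induction l as [|a l IH]; intros H; simpl; [lra|].
  apply Rplus_le_compat; auto with datatypes.
Qed.

Lemma fsum_nonneg l f : (forall x, In x l -> 0 <= f x) -> 0 <= fsum l f.
Proof. intros H. rewrite <- (fsum_zero l). apply fsum_le, H. Qed.

Lemma fsum_pos l f : l <> nil -> (forall x, In x l -> 0 < f x) -> 0 < fsum l f.
Proof.
  destruct l as [|a l]; intros Hl H; [congruence|]. rewrite fsum_cons.
  assert (0 < f a) by auto with datatypes.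
  assert (0 <= fsum l f) by (apply fsum_nonneg; intros; apply Rlt_le; auto with datatypes).
  lra.
Qed.

Lemma fsum_filter (p : T -> bool) l f :
  fsum (filter p l) f = fsum l (fun x => if p x then f x else 0).
Proof. induction l as [|a l IH]; simpl; [reflexivity|]. destruct (p a); simpl; rewrite IH; lra. Qed.

Lemma fsum_map {U} (h : U -> T) (l : list U) f : fsum (map h l) f = fsum l (fun x => f (h x)).
Proof. induction l; simpl; [reflexivity|]. rewrite IHl; reflexivity. Qed.

Lemma fsum_incl l1 l2 f : NoDup l1 -> incl l1 l2 -> (forall x, 0 <= f x) -> fsum l1 f <= fsum l2 f.
Proof.
  revert l2; induction l1 as [|a l1 IH]; intros l2 Hnd Hincl Hf.
  - apply fsum_nonneg; auto.
  - inversion Hnd as [|? ? Ha Hnd1]; subst.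
    destruct (in_split a l2) as [l3 [l4 ->]]; [apply Hincl; left; auto|].
    assert (fsum l1 f <= fsum (l3 ++ l4) f).
    { apply IH; auto. intros x Hx.
      destruct (in_app_or _ _ _ (Hincl x (or_intror Hx))) as [H|[H|H]]; subst;
        auto with datatypes; contradiction. }
    pose proof (Hf a). rewrite fsum_app in *. rewrite !fsum_cons. lra.
Qed.

End FiniteSums.

Lemma fsum_exchange {T U} (l1 : list T) (l2 : list U) (F : T -> U -> R) :
  fsum l1 (fun x => fsum l2 (F x)) = fsum l2 (fun y => fsum l1 (fun x => F x y)).
Proof.
  induction l1 as [|a l1 IH]; simpl; [symmetry; apply fsum_zero|].
  rewrite IH, <- fsum_plus. reflexivity.
Qed.

Lemma fsum_delta {T} (L : list T) (x : T) (F : T -> R) : NoDup L ->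
  fsum L (fun y => if em (x = y) then F y else 0) = if em (In x L) then F x else 0.
Proof.
  induction L as [|a L IH]; intros HL; simpl.
  - destruct em as [[]|]; reflexivity.
  - inversion HL as [|? ? Ha HL']; subst. rewrite IH by assumption.
    destruct (em (x = a)) as [->|Hxa]; [destruct (em (In a L))|destruct (em (In x L))]; simpl;
      destruct em; first [lra | intuition congruence].
Qed.

Section UnorderedSums.
Context {T : Type}.
Implicit Types (h k : T -> R) (l L W : list T).

Lemma tsum_is_lub h : summable h -> is_lub (psums h) (tsum h).
Proof.
  intros [M HM]. unfold tsum. apply epsilon_spec.
  destruct (completeness (psums h)) as [m Hm]; [| |exists m; exact Hm].
  - exists M. intros s [l [Hl ->]]; auto.
  - exists 0, nil. split; [constructor | reflexivity].
Qed.

Lemma fsum_le_tsum h l : summable h -> NoDup l -> fsum l h <= tsum h.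
Proof. intros Hs Hl. apply (tsum_is_lub h Hs). exists l; auto. Qed.

Lemma tsum_le h U : summable h -> (forall l, NoDup l -> fsum l h <= U) -> tsum h <= U.
Proof. intros Hs HU. apply (tsum_is_lub h Hs). intros s [l [Hl ->]]; auto. Qed.

Lemma tsum_eq h s : (forall l, NoDup l -> fsum l h <= s) ->
  (forall U, (forall l, NoDup l -> fsum l h <= U) -> s <= U) -> tsum h = s.
Proof.
  intros Hub Hleast. assert (Hs : summable h) by (exists s; auto).
  apply Rle_antisym; [apply tsum_le | apply Hleast]; auto.
  intros; apply fsum_le_tsum; auto.
Qed.

Lemma tsum_nonneg h : summable h -> 0 <= tsum h.
Proof. intros Hs. exact (fsum_le_tsum h nil Hs (NoDup_nil _)). Qed.

Lemma summable_le h k : (forall x, 0 <= h x <= k x) -> summable k -> summable h.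
Proof.
  intros H [M HM]. exists M. intros l Hl.
  apply Rle_trans with (fsum l k); auto. apply fsum_le; intros; apply H.
Qed.

Lemma summable_plus h k : summable h -> summable k -> summable (fun x => h x + k x).
Proof.
  intros [M1 H1] [M2 H2]. exists (M1 + M2). intros l Hl.
  rewrite fsum_plus. specialize (H1 l Hl). specialize (H2 l Hl). lra.
Qed.

Lemma summable_scal h a : 0 <= a -> summable h -> summable (fun x => a * h x).
Proof.
  intros Ha [M HM]. exists (a * M). intros l Hl.
  rewrite fsum_scal. apply Rmult_le_compat_l; auto.
Qed.

Lemma tsum_scal h a : 0 <= a -> summable h -> tsum (fun x => a * h x) = a * tsum h.
Proof.
  intros Ha Hs. apply tsum_eq.
  - intros l Hl. rewrite fsum_scal. apply Rmult_le_compat_l; auto. apply fsum_le_tsum; auto.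
  - intros U HU. destruct Ha as [Ha | <-].
    + assert (Hle : tsum h <= U / a).
      { apply tsum_le; auto. intros l Hl. specialize (HU l Hl). rewrite fsum_scal in HU.
        apply (Rmult_le_reg_l a); auto. field_simplify; lra. }
      apply (Rmult_le_compat_l a) in Hle; [|lra]. field_simplify in Hle; lra.
    + specialize (HU nil (NoDup_nil _)). simpl in HU. lra.
Qed.

Definition inb W (x : T) : bool := if em (In x W) then true else false.

Lemma inb_In W x : inb W x = true <-> In x W.
Proof. unfold inb. destruct em; split; auto; discriminate. Qed.

Lemma tsum_plus h k : (forall x, 0 <= h x) -> (forall x, 0 <= k x) -> summable h -> summable k ->
  tsum (fun x => h x + k x) = tsum h + tsum k.
Proof.
  intros Ph Pk Sh Sk. apply tsum_eq.
  - intros l Hl. rewrite fsum_plus.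
    pose proof (fsum_le_tsum h l Sh Hl). pose proof (fsum_le_tsum k l Sk Hl). lra.
  - intros U HU.
    assert (Hmerge : forall l1 l2, NoDup l1 -> NoDup l2 -> fsum l1 h + fsum l2 k <= U).
    { intros l1 l2 N1 N2. set (l3 := l1 ++ filter (fun x => negb (inb l1 x)) l2).
      assert (N3 : NoDup l3).
      { apply NoDup_app; auto using NoDup_filter.
        intros x Hx1 Hx2. apply filter_In in Hx2 as [_ Hx2].
        apply (proj2 (inb_In l1 x)) in Hx1. rewrite Hx1 in Hx2. discriminate. }
      assert (fsum l1 h <= fsum l3 h)
        by (apply fsum_incl; auto; intros x Hx; apply in_or_app; auto).
      assert (fsum l2 k <= fsum l3 k).
      { apply fsum_incl; auto. intros x Hx. apply in_or_app.
        destruct (inb l1 x) eqn:E; [left; apply inb_In; auto|].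
        right. apply filter_In. rewrite E. auto. }
      specialize (HU l3 N3). rewrite fsum_plus in HU. lra. }
    assert (Hh : forall l2, NoDup l2 -> tsum h <= U - fsum l2 k).
    { intros l2 N2. apply tsum_le; auto. intros l1 N1. specialize (Hmerge l1 l2 N1 N2). lra. }
    assert (tsum k <= U - tsum h).
    { apply tsum_le; auto. intros l2 N2. specialize (Hh l2 N2). lra. }
    lra.
Qed.

Lemma tsum_finite h L : (forall x, 0 <= h x) -> NoDup L -> (forall x, ~ In x L -> h x = 0) ->
  summable h /\ tsum h = fsum L h.
Proof.
  intros Hh HL Hz.
  assert (Hub : forall l, NoDup l -> fsum l h <= fsum L h).
  { intros l Hl. replace (fsum l h) with (fsum (filter (inb L) l) h).
    - apply fsum_incl; auto using NoDup_filter.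
      intros x Hx. apply filter_In in Hx as [_ Hx]. apply inb_In; auto.
    - rewrite fsum_filter. apply fsum_ext. intros x _.
      destruct (inb L x) eqn:E; auto. symmetry. apply Hz. rewrite <- inb_In, E. discriminate. }
  split; [exists (fsum L h); auto|].
  apply tsum_eq; auto.
Qed.

Lemma tsum_zero : tsum (fun _ : T => 0) = 0.
Proof. apply (tsum_finite _ nil); auto using NoDup_nil; intros; lra. Qed.

Definition out_ind W (y : T) : R := if em (In y W) then 0 else 1.

Lemma summable_out h W : (forall x, 0 <= h x) -> summable h ->
  summable (fun y => h y * out_ind W y).
Proof.
  intros Hh. apply summable_le. intros y. specialize (Hh y).
  unfold out_ind. destruct em; lra.
Qed.

Lemma tsum_split h W : (forall x, 0 <= h x) -> summable h -> NoDup W ->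
  tsum h = fsum W h + tsum (fun y => h y * out_ind W y).
Proof.
  intros Hh Hs HW.
  set (hin := fun y => h y * (1 - out_ind W y)).
  assert (Hin : forall y, 0 <= hin y <= h y).
  { intros y. specialize (Hh y). unfold hin, out_ind. destruct em; lra. }
  assert (Hout : forall y, 0 <= h y * out_ind W y).
  { intros y. specialize (Hh y). unfold out_ind. destruct em; lra. }
  destruct (tsum_finite hin W) as [_ Efin]; auto.
  - intros; apply Hin.
  - intros y Hy. unfold hin, out_ind. destruct em; [contradiction | ring].
  - replace h with (fun y => hin y + h y * out_ind W y) at 1
      by (apply functional_extensionality; intros; unfold hin; ring).
    rewrite tsum_plus, Efin; auto using summable_out.
    + f_equal. apply fsum_ext. intros y Hy.
      unfold hin, out_ind. destruct em; [ring | contradiction].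
    + intros; apply Hin.
    + apply (summable_le hin h); auto.
Qed.

Lemma tsum_fsum {J} (I : list J) (F : J -> T -> R) :
  (forall i x, 0 <= F i x) -> (forall i, summable (F i)) ->
  summable (fun x => fsum I (fun i => F i x)) /\
  tsum (fun x => fsum I (fun i => F i x)) = fsum I (fun i => tsum (F i)).
Proof.
  intros HF HS. induction I as [|a I [IS IE]]; simpl.
  - split; [exists 0; intros; rewrite fsum_zero; lra | apply tsum_zero].
  - rewrite <- IE. split; [apply summable_plus; auto|].
    apply tsum_plus; auto. intros; apply fsum_nonneg; auto.
Qed.

End UnorderedSums.

Lemma tsum_swap {T} (h : T * T -> R) : summable h ->
  summable (fun p => h (snd p, fst p)) /\ tsum (fun p => h (snd p, fst p)) = tsum h.
Proof.
  intros Hs. set (sw := fun p : T * T => (snd p, fst p)).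
  assert (Hsw : forall l : list (T * T), NoDup l -> NoDup (map sw l)).
  { intros l. apply NoDup_map_NoDup_ForallPairs. intros [a b] [a' b'] _ _ E. inversion E; auto. }
  assert (Hs' : summable (fun p => h (sw p))).
  { exists (tsum h). intros l Hl. rewrite <- fsum_map. apply fsum_le_tsum; auto. }
  split; auto. apply tsum_eq.
  - intros l Hl. rewrite <- fsum_map. apply fsum_le_tsum; auto.
  - intros U HU. apply tsum_le; auto. intros l Hl.
    specialize (HU _ (Hsw l Hl)). rewrite fsum_map in HU.
    erewrite fsum_ext; [exact HU|]. intros [a b] _. reflexivity.
Qed.

Lemma tsum_row {T} (x0 : T) (k : T -> R) : (forall y, 0 <= k y) -> summable k ->
  summable (fun p : T * T => if em (fst p = x0) then k (snd p) else 0) /\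
  tsum (fun p : T * T => if em (fst p = x0) then k (snd p) else 0) = tsum k.
Proof.
  intros Hk Hs.
  set (row := fun l : list (T * T) => map snd (filter (fun p => inb (x0 :: nil) (fst p)) l)).
  assert (Erow : forall l,
    fsum l (fun p => if em (fst p = x0) then k (snd p) else 0) = fsum (row l) k).
  { intros l. unfold row. rewrite fsum_map, fsum_filter. apply fsum_ext. intros p _.
    unfold inb. simpl. do 2 destruct em; intuition congruence. }
  assert (Nrow : forall l, NoDup l -> NoDup (row l)).
  { intros l Hl. apply NoDup_map_NoDup_ForallPairs; auto using NoDup_filter.
    intros [a b] [a' b'] Ha Ha' E.
    apply filter_In in Ha as [_ Ha]. apply filter_In in Ha' as [_ Ha'].
    apply inb_In in Ha. apply inb_In in Ha'. simpl in *. intuition congruence. }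
  assert (Hs' : summable (fun p : T * T => if em (fst p = x0) then k (snd p) else 0)).
  { exists (tsum k). intros l Hl. rewrite Erow. apply fsum_le_tsum; auto. }
  split; auto. apply tsum_eq.
  - intros l Hl. rewrite Erow. apply fsum_le_tsum; auto.
  - intros U HU. apply tsum_le; auto. intros l Hl.
    assert (Hl' : NoDup (map (fun y => (x0, y)) l)).
    { apply NoDup_map_NoDup_ForallPairs; auto. intros a b _ _ E. inversion E; auto. }
    specialize (HU _ Hl'). rewrite fsum_map in HU. simpl in HU.
    erewrite fsum_ext; [exact HU|]. intros y _. destruct em; [reflexivity | congruence].
Qed.

Lemma tsum_rows {T} (L : list T) (F : T -> T -> R) :
  NoDup L -> (forall x y, 0 <= F x y) -> (forall x, summable (F x)) ->
  summable (fun p : T * T => if em (In (fst p) L) then F (fst p) (snd p) else 0) /\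
  tsum (fun p : T * T => if em (In (fst p) L) then F (fst p) (snd p) else 0) =
  fsum L (fun x => tsum (F x)).
Proof.
  intros HL HF HS.
  set (G := fun x (p : T * T) => if em (fst p = x) then F x (snd p) else 0).
  replace (fun p : T * T => if em (In (fst p) L) then F (fst p) (snd p) else 0)
    with (fun p => fsum L (fun x => G x p))
    by (apply functional_extensionality; intros p;
        apply (fsum_delta L (fst p) (fun x => F x (snd p)) HL)).
  assert (HG : forall x p, 0 <= G x p) by (intros; unfold G; destruct em; auto; lra).
  destruct (tsum_fsum L G HG) as [S E]; [intros x; apply (tsum_row x (F x)); auto|].
  split; auto. rewrite E. apply fsum_ext. intros x _. apply (tsum_row x (F x)); auto.
Qed.

Definition cs_dominated (S P Q : R) : Prop := 0 <= S /\ 0 <= P /\ 0 <= Q /\ S ^ 2 <= P * Q.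

Lemma pow2_le_reg a b : 0 <= b -> a ^ 2 <= b ^ 2 -> a <= b.
Proof. intros Hb H. destruct (Rle_dec a b); auto. nra. Qed.

Lemma cs_dominated_mul w a b : 0 <= w -> cs_dominated (w * Rabs (a * b)) (w * a ^ 2) (w * b ^ 2).
Proof.
  intros Hw. repeat split; try apply Rmult_le_pos; auto using Rabs_pos, pow2_ge_0.
  right. rewrite Rabs_mult.
  replace ((w * (Rabs a * Rabs b)) ^ 2) with (w ^ 2 * (Rabs a ^ 2 * Rabs b ^ 2)) by ring.
  rewrite !pow2_abs. ring.
Qed.

Lemma cs_dominated_diag z : 0 <= z -> cs_dominated z z z.
Proof. intros Hz. repeat split; auto. right; ring. Qed.

Lemma cs_dominated_add S1 P1 Q1 S2 P2 Q2 :
  cs_dominated S1 P1 Q1 -> cs_dominated S2 P2 Q2 -> cs_dominated (S1 + S2) (P1 + P2) (Q1 + Q2).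
Proof.
  intros [HS1 [HP1 [HQ1 H1]]] [HS2 [HP2 [HQ2 H2]]].
  (* S1 S2 <= sqrt (P1 Q2 * P2 Q1) <= (P1 Q2 + P2 Q1) / 2 *)
  assert (Hcross : (S1 * S2) ^ 2 <= ((P1 * Q2 + P2 * Q1) / 2) ^ 2).
  { apply Rle_trans with ((P1 * Q1) * (P2 * Q2)).
    - replace ((S1 * S2) ^ 2) with (S1 ^ 2 * S2 ^ 2) by ring.
      apply Rmult_le_compat; auto using pow2_ge_0.
    - pose proof (pow2_ge_0 (P1 * Q2 - P2 * Q1)). nra. }
  apply pow2_le_reg in Hcross; [|apply Rmult_le_pos; [apply Rplus_le_le_0_compat|]; nra].
  repeat split; nra.
Qed.

Lemma cs_dominated_fsum {T} (l : list T) (s p q : T -> R) :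
  (forall x, In x l -> cs_dominated (s x) (p x) (q x)) ->
  cs_dominated (fsum l s) (fsum l p) (fsum l q).
Proof.
  induction l as [|a l IH]; intros H; simpl.
  - apply cs_dominated_diag; lra.
  - apply cs_dominated_add; auto with datatypes.
Qed.

Lemma form_bounds_of_cs α N A Q Q' :
  0 <= α -> α * N <= A -> cs_dominated A Q Q' -> Q + Q' = 2 * N ->
  (1 - sqrt (1 - α ^ 2)) * N <= Q /\ Q <= (1 + sqrt (1 - α ^ 2)) * N.
Proof.
  intros Hα HA [HA0 [HQ [HQ' Hcs]]] Hsum.
  set (s := sqrt (1 - α ^ 2)).
  assert (Hs0 : 0 <= s) by apply sqrt_pos.
  assert (Hs : 1 - α ^ 2 <= s ^ 2).
  { unfold s. destruct (Rle_dec 0 (1 - α ^ 2)).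
    - rewrite pow2_sqrt; lra.
    - rewrite sqrt_neg_0 by lra. lra. }
  assert (HN : 0 <= N) by lra.
  assert (HαN : (α * N) ^ 2 <= A ^ 2) by (apply pow_incr; split; [apply Rmult_le_pos|]; auto).
  assert (Hdev : (Q - N) ^ 2 <= (s * N) ^ 2).
  { replace Q' with (2 * N - Q) in Hcs by lra.
    assert (N ^ 2 * (1 - α ^ 2) <= N ^ 2 * s ^ 2)
      by (apply Rmult_le_compat_l; auto using pow2_ge_0).
    nra. }
  assert (HsN : 0 <= s * N) by (apply Rmult_le_pos; auto).
  assert (Q - N <= s * N) by (apply pow2_le_reg; auto).
  assert (N - Q <= s * N) by (apply pow2_le_reg; auto; nra).
  split; nra.
Qed.

Lemma Rabs_plus_same_sign u v : 0 <= u * v -> Rabs (u + v) = Rabs u + Rabs v.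
Proof. intros H. unfold Rabs; repeat destruct Rcase_abs; nra. Qed.

Lemma filter_length_lt {T} (p q : T -> bool) (L : list T) :
  (forall x, In x L -> q x = true -> p x = true) ->
  (exists x, In x L /\ p x = true /\ q x = false) ->
  (length (filter q L) < length (filter p L))%nat.
Proof.
  intros Himp [x [Hx [Hp Hq]]].
  assert (E : filter q (filter p L) = filter q L).
  { clear Hx. induction L as [|a L IH]; simpl; auto.
    assert (IH' : filter q (filter p L) = filter q L) by (apply IH; auto with datatypes).
    destruct (p a) eqn:Ea; simpl; rewrite IH'; auto.
    destruct (q a) eqn:Eb; auto.
    assert (p a = true) by auto with datatypes. congruence. }
  rewrite <- E. pose proof (filter_length_le q (filter p L)).
  destruct (Nat.eq_dec (length (filter q (filter p L))) (length (filter p L))) as [Heq|]; [|lia].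
  apply filter_length_forallb in Heq. rewrite forallb_forall in Heq.
  rewrite Heq in Hq; [discriminate|]. apply filter_In; auto.
Qed.

Lemma list_argmin {T} (g : T -> R) (a : T) (W : list T) :
  exists x0, In x0 (a :: W) /\ forall x, In x (a :: W) -> g x0 <= g x.
Proof.
  revert a; induction W as [|w W IH]; intros a.
  - exists a. split; [left; auto|]. intros x [->|[]]; lra.
  - destruct (IH w) as [x1 [H1 H2]]. destruct (Rle_dec (g a) (g x1)).
    + exists a. split; [left; auto|]. intros x [->|Hx]; [lra|]. specialize (H2 x Hx); lra.
    + exists x1. split; [right; auto|]. intros x [->|Hx]; [lra|]. auto.
Qed.

Section Coarea.
Context {T : Type} (L : list T) (B : T -> T -> R) (C : T -> R).
Hypotheses (B_nonneg : forall x y, 0 <= B x y) (B_sym : forall x y, B x y = B y x)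
  (C_nonneg : forall x, 0 <= C x).

Definition indicator (p : T -> bool) (x : T) : R := if p x then 1 else 0.

Definition posb (g : T -> R) (x : T) : bool := if Rlt_dec 0 (g x) then true else false.

Definition tv_energy (g : T -> R) : R :=
  fsum L (fun x => fsum L (fun y => / 2 * B x y * Rabs (g x - g y))) + fsum L (fun x => C x * g x).

Lemma tv_energy_nonneg g : (forall x, In x L -> 0 <= g x) -> 0 <= tv_energy g.
Proof.
  intros Hg. apply Rplus_le_le_0_compat; apply fsum_nonneg; intros x Hx.
  - apply fsum_nonneg; intros y _.
    pose proof (B_nonneg x y). pose proof (Rabs_pos (g x - g y)). nra.
  - apply Rmult_le_pos; auto.
Qed.

Lemma tv_energy_plus g h : (forall x y, In x L -> In y L -> 0 <= (g x - g y) * (h x - h y)) ->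
  tv_energy (fun x => g x + h x) = tv_energy g + tv_energy h.
Proof.
  intros Hco. unfold tv_energy.
  rewrite (fsum_ext L (fun x => C x * (g x + h x)) (fun x => C x * g x + C x * h x))
    by (intros; ring).
  rewrite fsum_plus. enough (E : forall x, In x L ->
    fsum L (fun y => / 2 * B x y * Rabs (g x + h x - (g y + h y))) =
    fsum L (fun y => / 2 * B x y * Rabs (g x - g y)) +
    fsum L (fun y => / 2 * B x y * Rabs (h x - h y))).
  { rewrite (fsum_ext _ _ _ E), fsum_plus. ring. }
  intros x Hx. rewrite <- fsum_plus. apply fsum_ext. intros y Hy.
  replace (g x + h x - (g y + h y)) with ((g x - g y) + (h x - h y)) by ring.
  rewrite Rabs_plus_same_sign by auto. ring.
Qed.

Lemma tv_energy_scal m g : 0 <= m -> tv_energy (fun x => m * g x) = m * tv_energy g.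
Proof.
  intros Hm. unfold tv_energy. rewrite Rmult_plus_distr_l, <- !fsum_scal.
  f_equal; apply fsum_ext; intros x _.
  - rewrite <- fsum_scal. apply fsum_ext; intros y _.
    rewrite <- Rmult_minus_distr_l, Rabs_mult, (Rabs_pos_eq m) by exact Hm. ring.
  - ring.
Qed.

Lemma tv_energy_indicator p : tv_energy (indicator p) =
  fsum L (fun x => if p x then fsum L (fun y => if p y then 0 else B x y) + C x else 0).
Proof.
  set (D := fun x y => if p x then (if p y then 0 else B x y) else 0).
  assert (Ecut : forall x y,
    / 2 * B x y * Rabs (indicator p x - indicator p y) = / 2 * D x y + / 2 * D y x).
  { intros x y. unfold D, indicator. rewrite (B_sym y x).
    destruct (p x), (p y);
      rewrite ?Rminus_diag, ?Rabs_R0, ?Rminus_0_r, ?Rminus_0_l, ?Rabs_Ropp, ?Rabs_R1; ring. }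
  assert (Esym : fsum L (fun x => fsum L (fun y => D y x)) = fsum L (fun x => fsum L (D x))).
  { apply fsum_exchange. }
  unfold tv_energy.
  transitivity (fsum L (fun x => fsum L (D x)) + fsum L (fun x => C x * indicator p x)).
  - f_equal.
    rewrite (fsum_ext L _ (fun x => / 2 * fsum L (D x) + / 2 * fsum L (fun y => D y x)))
      by (intros x _; rewrite <- !fsum_scal, <- fsum_plus; apply fsum_ext; auto).
    rewrite fsum_plus, !fsum_scal, Esym. lra.
  - rewrite <- fsum_plus. apply fsum_ext. intros x _. unfold D, indicator.
    destruct (p x); [ring|]. rewrite fsum_zero. ring.
Qed.

Lemma min_positive_value g : (forall x, In x L -> 0 <= g x) -> filter (posb g) L <> nil ->
  exists x0, In x0 L /\ 0 < g x0 /\ forall x, In x L -> 0 < g x -> g x0 <= g x.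
Proof.
  intros Hg Hne. destruct (filter (posb g) L) as [|a W] eqn:E; [congruence|].
  destruct (list_argmin g a W) as [x0 [Hx0 Hmin]]. rewrite <- E in Hx0, Hmin.
  assert (Hpos : forall x, In x (filter (posb g) L) <-> In x L /\ 0 < g x).
  { intros x. rewrite filter_In. unfold posb. destruct Rlt_dec; intuition discriminate. }
  apply Hpos in Hx0 as [Hx0L Hx0p]. exists x0. repeat split; auto.
  intros x Hx Hgx. apply Hmin, Hpos; auto.
Qed.

(* m is the lowest positive value of g, so g' = g - m 1_{g > 0} stays nonnegative on L. *)
Lemma peel_lowest_level g : (forall x, In x L -> 0 <= g x) -> filter (posb g) L <> nil ->
  exists m g', 0 < m /\ (forall x, In x L -> 0 <= g' x) /\
    (forall x y, In x L -> In y L ->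
       0 <= (g' x - g' y) * (m * indicator (posb g) x - m * indicator (posb g) y)) /\
    (length (filter (posb g') L) < length (filter (posb g) L))%nat /\
    (exists x0, In x0 L /\ posb g x0 = true) /\
    g = fun x => g' x + m * indicator (posb g) x.
Proof.
  intros Hg Hne. destruct (min_positive_value g Hg Hne) as [x0 [Hx0 [Hm Hmin]]].
  set (m := g x0) in *. set (p := posb g).
  set (g' := fun x => g x - m * indicator p x).
  assert (Hcase : forall x, In x L ->
    (p x = true /\ g' x = g x - m /\ m <= g x) \/ (p x = false /\ g' x = 0 /\ g x = 0)).
  { intros x Hx. unfold g', p, posb, indicator. destruct Rlt_dec.
    - left. repeat split; [ring | auto].
    - right. specialize (Hg x Hx). repeat split; lra. }
  assert (Hx0p : p x0 = true) by (unfold p, posb; destruct Rlt_dec; auto; lra).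
  exists m, g'. repeat split; auto.
  - intros x Hx. destruct (Hcase x Hx); lra.
  - intros x y Hx Hy. unfold indicator.
    destruct (Hcase x Hx) as [[-> ?]|[-> ?]], (Hcase y Hy) as [[-> ?]|[-> ?]]; nra.
  - apply filter_length_lt.
    + intros x Hx. unfold posb. destruct Rlt_dec; [|discriminate].
      destruct (Hcase x Hx); [tauto | lra].
    + exists x0. destruct (Hcase x0 Hx0) as [[_ [E _]]|[Hp _]]; [|congruence].
      repeat split; auto. unfold posb. destruct Rlt_dec; auto. unfold m in E; lra.
  - exists x0; auto.
  - apply functional_extensionality; intros; unfold g'; ring.
Qed.

Variables (M : T -> R) (α : R).
Hypothesis isoperimetric : forall p : T -> bool, (exists x, In x L /\ p x = true) ->
  α * fsum L (fun x => M x * indicator p x) <= tv_energy (indicator p).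

Theorem coarea_ineq g : (forall x, In x L -> 0 <= g x) ->
  α * fsum L (fun x => M x * g x) <= tv_energy g.
Proof.
  remember (length (filter (posb g) L)) as k eqn:Hk. revert g Hk.
  induction k as [k IH] using (well_founded_induction Wf_nat.lt_wf). intros g -> Hg.
  destruct (classic (filter (posb g) L = nil)) as [Hnil|Hne].
  - assert (Hzero : forall x, In x L -> g x = 0).
    { intros x Hx. destruct (Rlt_dec 0 (g x)) as [Hp|Hp]; [|specialize (Hg x Hx); lra].
      assert (Hin : In x (filter (posb g) L))
        by (apply filter_In; unfold posb; destruct Rlt_dec; tauto).
      rewrite Hnil in Hin; destruct Hin. }
    rewrite (fsum_ext L _ (fun _ => 0)) by (intros x Hx; rewrite Hzero; auto; ring).
    rewrite fsum_zero, Rmult_0_r. apply tv_energy_nonneg; auto.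
  - destruct (peel_lowest_level g Hg Hne) as [m [g' [Hm [Hg' [Hco [Hlt [Hx0 ->]]]]]]].
    set (p := posb _) in *.
    rewrite tv_energy_plus, tv_energy_scal by (auto; lra).
    rewrite (fsum_ext L _ (fun x => M x * g' x + m * (M x * indicator p x))) by (intros; ring).
    rewrite fsum_plus, fsum_scal.
    assert (IH' := IH _ Hlt g' eq_refl Hg').
    assert (Hiso := isoperimetric p Hx0).
    assert (m * (α * fsum L (fun x => M x * indicator p x)) <= m * tv_energy (indicator p))
      by (apply Rmult_le_compat_l; lra).
    lra.
Qed.

Definition dirichlet_form (f : T -> R) : R :=
  fsum L (fun x => fsum L (fun y => / 2 * B x y * (f x - f y) ^ 2)) +
  fsum L (fun x => C x * f x ^ 2).

Hypothesis M_eq : forall x, M x = fsum L (B x) + C x.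

Theorem dirichlet_form_bounds f : 0 <= α ->
  (1 - sqrt (1 - α ^ 2)) * fsum L (fun x => M x * f x ^ 2) <= dirichlet_form f /\
  dirichlet_form f <= (1 + sqrt (1 - α ^ 2)) * fsum L (fun x => M x * f x ^ 2).
Proof.
  intros Hα.
  set (Cf := fsum L (fun x => C x * f x ^ 2)).
  set (Dplus := fsum L (fun x => fsum L (fun y => / 2 * B x y * (f x + f y) ^ 2))).
  apply form_bounds_of_cs with (A := tv_energy (fun x => f x ^ 2)) (Q' := Dplus + Cf); auto.
  - apply coarea_ineq. intros; apply pow2_ge_0.
  - apply cs_dominated_add; apply cs_dominated_fsum; intros x _.
    + apply cs_dominated_fsum; intros y _.
      replace (f x ^ 2 - f y ^ 2) with ((f x - f y) * (f x + f y)) by ring.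
      apply cs_dominated_mul. pose proof (B_nonneg x y); lra.
    + apply cs_dominated_diag, Rmult_le_pos; auto using pow2_ge_0.
  - set (Bx := fsum L (fun x => fsum L (fun y => B x y * f x ^ 2))).
    set (By := fsum L (fun x => fsum L (fun y => B x y * f y ^ 2))).
    assert (Esym : By = Bx).
    { unfold By, Bx. rewrite fsum_exchange.
      apply fsum_ext; intros x _. apply fsum_ext; intros y _. rewrite B_sym. reflexivity. }
    assert (EM : fsum L (fun x => M x * f x ^ 2) = Bx + Cf).
    { unfold Bx, Cf. rewrite <- fsum_plus. apply fsum_ext; intros x _.
      rewrite M_eq, Rmult_plus_distr_r, (Rmult_comm (fsum L (B x))), <- fsum_scal.
      f_equal. apply fsum_ext; intros; ring. }
    assert (Epar :
      fsum L (fun x => fsum L (fun y => / 2 * B x y * (f x - f y) ^ 2)) + Dplus = By + Bx).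
    { unfold Dplus, By, Bx. rewrite <- !fsum_plus. apply fsum_ext; intros x _.
      rewrite <- !fsum_plus. apply fsum_ext; intros y _. field. }
    unfold dirichlet_form. fold Cf. lra.
Qed.

End Coarea.

Section WeightedGraph.
Context {V : Type} (b : V -> V -> R) (c : V -> R).
Hypotheses (b_nonneg : forall x y, 0 <= b x y) (c_nonneg : forall x, 0 <= c x)
  (b_sym : forall x y, b x y = b y x) (b_summable : forall x, summable (b x)).

Definition out_weight (L : list V) (x : V) : R := tsum (fun y => b x y * out_ind L y).

Lemma out_weight_nonneg L x : 0 <= out_weight L x.
Proof. apply tsum_nonneg, summable_out; auto. Qed.

Lemma nw_split L x : NoDup L -> nw b c x = fsum L (b x) + (c x + out_weight L x).
Proof. intros HL. unfold nw, out_weight. rewrite (tsum_split (b x) L); auto. ring. Qed.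

Lemma bdry_filter L (p : V -> bool) : NoDup L ->
  bdry b c (filter p L) = tv_energy L b (fun x => c x + out_weight L x) (indicator p).
Proof.
  intros HL. rewrite tv_energy_indicator by auto. unfold bdry. rewrite !fsum_filter, <- fsum_plus.
  apply fsum_ext. intros x _. destruct (p x); [|ring].
  pose proof (tsum_split (b x) (filter p L) (b_nonneg x) (b_summable x) (NoDup_filter p HL)) as Ep.
  pose proof (nw_split L x HL) as EL. unfold nw in EL.
  rewrite fsum_filter in Ep.
  rewrite (fsum_ext L (b x) (fun y => (if p y then b x y else 0) + (if p y then 0 else b x y)))
    in EL by (intros y _; destruct (p y); ring).
  rewrite fsum_plus in EL.
  change (fun y => b x y * out_ind (filter p L) y)
    with (fun y => b x y * (if em (In y (filter p L)) then 0 else 1)) in Ep.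
  lra.
Qed.

Lemma sq_le_fsum_sq (L : list V) (f : V -> R) : NoDup L -> (forall x, ~ In x L -> f x = 0) ->
  forall y, f y ^ 2 <= fsum L (fun x => f x ^ 2).
Proof.
  intros HL Hf y. destruct (classic (In y L)) as [Hy|Hy].
  - apply Rle_trans with (fsum (y :: nil) (fun x => f x ^ 2)); [simpl; lra|].
    apply fsum_incl; [repeat constructor; auto | intros z [<-|[]]; auto | intros; apply pow2_ge_0].
  - rewrite Hf by auto. replace (0 ^ 2) with 0 by ring. apply fsum_nonneg; intros; apply pow2_ge_0.
Qed.

Section FiniteSupport.
Variables (L : list V) (f : V -> R).
Hypotheses (HL : NoDup L) (Hf : forall x, ~ In x L -> f x = 0).

Let K x y := b x y * (f x - f y) ^ 2.

Lemma energy_row_summable x : summable (K x).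
Proof.
  set (S := fsum L (fun z => f z ^ 2)).
  apply summable_le with (k := fun y => (2 * f x ^ 2 + 2 * S) * b x y).
  - intros y. pose proof (sq_le_fsum_sq L f HL Hf y) as Hy. fold S in Hy.
    assert (Hsq : (f x - f y) ^ 2 <= 2 * f x ^ 2 + 2 * S)
      by (pose proof (pow2_ge_0 (f x + f y));
          replace ((f x - f y) ^ 2) with (2 * f x ^ 2 + 2 * f y ^ 2 - (f x + f y) ^ 2)
            by ring; lra).
    unfold K. split; [apply Rmult_le_pos; auto using pow2_ge_0|].
    rewrite (Rmult_comm _ (b x y)). apply Rmult_le_compat_l; auto.
  - apply summable_scal; auto. pose proof (sq_le_fsum_sq L f HL Hf x) as Hx. fold S in Hx.
    pose proof (pow2_ge_0 (f x)). lra.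
Qed.

Lemma energy_row_tsum x : tsum (K x) = fsum L (K x) + f x ^ 2 * out_weight L x.
Proof.
  rewrite (tsum_split (K x) L); auto using energy_row_summable.
  - f_equal. unfold out_weight. rewrite <- tsum_scal by auto using pow2_ge_0, summable_out.
    f_equal. apply functional_extensionality. intros y. unfold K, out_ind.
    destruct em; [ring | rewrite (Hf y) by auto; ring].
  - intros y. unfold K. apply Rmult_le_pos; auto using pow2_ge_0.
Qed.

(* The pairs split into the rows x in L (K) and the pairs x outside L, y in L, which are
   the transposed rows J; so each edge leaving L contributes b(x,y) f(x)^2 twice. *)
Lemma tsum_pair_energy :
  tsum (fun p : V * V => b (fst p) (snd p) * (f (fst p) - f (snd p)) ^ 2) =
  fsum L (fun x => fsum L (K x)) + 2 * fsum L (fun x => f x ^ 2 * out_weight L x).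
Proof.
  set (J := fun y x => f y ^ 2 * (b y x * out_ind L x)).
  assert (HJ : forall y x, 0 <= J y x).
  { intros y x. unfold J, out_ind. pose proof (b_nonneg y x). pose proof (pow2_ge_0 (f y)).
    destruct em; nra. }
  assert (HK : forall x y, 0 <= K x y)
    by (intros; unfold K; apply Rmult_le_pos; auto using pow2_ge_0).
  assert (SJ : forall y, summable (J y))
    by (intros; apply summable_scal, summable_out; auto using pow2_ge_0).
  set (rows := fun (F : V -> V -> R) (p : V * V) =>
    if em (In (fst p) L) then F (fst p) (snd p) else 0).
  destruct (tsum_rows L K HL HK energy_row_summable) as [SRK ERK]; fold (rows K) in SRK, ERK.
  destruct (tsum_rows L J HL HJ SJ) as [SRJ ERJ]; fold (rows J) in SRJ, ERJ.
  destruct (tsum_swap (rows J) SRJ) as [SRJ' ERJ'].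
  replace (fun p : V * V => b (fst p) (snd p) * (f (fst p) - f (snd p)) ^ 2)
    with (fun p => rows K p + rows J (snd p, fst p)).
  2:{ apply functional_extensionality. intros [x y]. unfold rows, K, J, out_ind. simpl.
      destruct (em (In x L)), (em (In y L)); rewrite ?(Hf x), ?(Hf y), ?(b_sym y x) by auto; ring. }
  assert (Hrows : forall F p, (forall x y, 0 <= F x y) -> 0 <= rows F p)
    by (intros; unfold rows; destruct em; auto; lra).
  rewrite tsum_plus, ERJ', ERK, ERJ by auto.
  rewrite (fsum_ext L (fun x => tsum (K x)) _ (fun x _ => energy_row_tsum x)), fsum_plus.
  rewrite (fsum_ext L (fun y => tsum (J y)) (fun y => f y ^ 2 * out_weight L y)).
  - ring.
  - intros y _. unfold J, out_weight. apply tsum_scal; auto using pow2_ge_0, summable_out.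
Qed.

Lemma Qmax_finite : Qmax b c f = dirichlet_form L b (fun x => c x + out_weight L x) f.
Proof.
  destruct (tsum_finite (fun x => c x * f x ^ 2) L) as [_ Ec]; auto.
  { intros x. apply Rmult_le_pos; auto using pow2_ge_0. }
  { intros x Hx. rewrite Hf by auto. ring. }
  unfold Qmax, dirichlet_form. rewrite tsum_pair_energy, Ec.
  rewrite (fsum_ext L (fun x => (c x + out_weight L x) * f x ^ 2)
    (fun x => c x * f x ^ 2 + f x ^ 2 * out_weight L x)) by (intros; ring).
  rewrite (fsum_ext L (fun x => fsum L (fun y => / 2 * b x y * (f x - f y) ^ 2))
    (fun x => / 2 * fsum L (K x)))
    by (intros x _; rewrite <- fsum_scal; apply fsum_ext; intros y _; unfold K; ring).
  rewrite fsum_plus, fsum_scal. field.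
Qed.

End FiniteSupport.

Lemma bdry_nonneg W : 0 <= bdry b c W.
Proof.
  unfold bdry. apply Rplus_le_le_0_compat; apply fsum_nonneg; intros x _; auto.
  apply tsum_nonneg, (summable_out (b x) W); auto.
Qed.

(* Only needed to make the set of ratios defining alpha nonempty. *)
Variable v0 : V.
Hypothesis nw_pos : forall x, 0 < nw b c x.

Let ratio_set := fun r => ratios b c (fun _ => True) (- r).

Lemma ratio_nonneg W : W <> nil -> 0 <= bdry b c W / nW (nw b c) W.
Proof.
  intros HW. apply Rmult_le_pos; auto using bdry_nonneg.
  apply Rlt_le, Rinv_0_lt_compat, fsum_pos; auto.
Qed.

Lemma alpha_is_lub : is_lub ratio_set (- alpha b c (fun _ => True)).
Proof.
  unfold alpha. rewrite Ropp_involutive. apply epsilon_spec.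
  destruct (completeness ratio_set) as [m Hm]; [| |exists m; exact Hm].
  - exists 0. intros r [W [_ [HW [_ Hr]]]]. pose proof (ratio_nonneg W HW). lra.
  - exists (- (bdry b c (v0 :: nil) / nW (nw b c) (v0 :: nil))), (v0 :: nil).
    repeat split; [repeat constructor; auto | discriminate | ring].
Qed.

Lemma alpha_nonneg : 0 <= alpha b c (fun _ => True).
Proof.
  enough (- alpha b c (fun _ => True) <= 0) by lra.
  apply alpha_is_lub. intros r [W [_ [HW [_ Hr]]]]. pose proof (ratio_nonneg W HW). lra.
Qed.

Lemma alpha_mul_nW_le_bdry W : NoDup W -> W <> nil ->
  alpha b c (fun _ => True) * nW (nw b c) W <= bdry b c W.
Proof.
  intros HW Hne. assert (HnW : 0 < nW (nw b c) W) by (apply fsum_pos; auto).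
  assert (- (bdry b c W / nW (nw b c) W) <= - alpha b c (fun _ => True)).
  { apply alpha_is_lub. exists W. repeat split; auto. ring. }
  apply Rmult_le_reg_r with (/ nW (nw b c) W); [apply Rinv_0_lt_compat; auto|].
  rewrite Rmult_assoc, Rinv_r by lra. fold (bdry b c W / nW (nw b c) W). lra.
Qed.

Theorem Qmax_bounds_finite L f : NoDup L -> (forall x, ~ In x L -> f x = 0) ->
  (1 - sqrt (1 - alpha b c (fun _ => True) ^ 2)) * nrm2 (nw b c) f <= Qmax b c f /\
  Qmax b c f <= (1 + sqrt (1 - alpha b c (fun _ => True) ^ 2)) * nrm2 (nw b c) f.
Proof.
  intros HL Hf.
  destruct (tsum_finite (fun x => nw b c x * f x ^ 2) L) as [_ EN]; auto.
  { intros x. apply Rmult_le_pos; [apply Rlt_le, nw_pos | apply pow2_ge_0]. }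
  { intros x Hx. rewrite Hf by auto. ring. }
  unfold nrm2. rewrite EN, (Qmax_finite L f HL Hf).
  apply dirichlet_form_bounds; auto using alpha_nonneg.
  - intros x. apply Rplus_le_le_0_compat; auto using out_weight_nonneg.
  - intros p [x [Hx Hp]]. rewrite <- bdry_filter by auto.
    replace (fsum L (fun x => nw b c x * indicator p x)) with (nW (nw b c) (filter p L))
      by (unfold nW; rewrite fsum_filter; apply fsum_ext; intros y _;
          unfold indicator; destruct (p y); ring).
    apply alpha_mul_nW_le_bdry; [apply NoDup_filter; auto|].
    intros E. apply (in_nil (a := x)). rewrite <- E. apply filter_In; auto.
  - intros x. apply nw_split; auto.
Qed.

End WeightedGraph.

Section L2.
Context {V : Type} (n : V -> R).
Hypothesis n_nonneg : forall x, 0 <= n x.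

Lemma l2_triangle a b : in_l2 n a -> in_l2 n b ->
  in_l2 n (fun x => a x + b x) /\
  sqrt (nrm2 n (fun x => a x + b x)) <= sqrt (nrm2 n a) + sqrt (nrm2 n b).
Proof.
  intros Sa Sb. set (Na := nrm2 n a). set (Nb := nrm2 n b).
  assert (Hfin : forall l, NoDup l ->
    fsum l (fun x => n x * (a x + b x) ^ 2) <= (sqrt Na + sqrt Nb) ^ 2).
  { intros l Hl.
    set (P := fsum l (fun x => n x * a x ^ 2)). set (Q := fsum l (fun x => n x * b x ^ 2)).
    set (X := fsum l (fun x => n x * Rabs (a x * b x))).
    destruct (cs_dominated_fsum l (fun x => n x * Rabs (a x * b x))
      (fun x => n x * a x ^ 2) (fun x => n x * b x ^ 2)) as [HX [HP [HQ Hcs]]];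
      [intros; apply cs_dominated_mul; auto|].
    fold X P Q in HX, HP, HQ, Hcs.
    assert (HXPQ : X <= sqrt P * sqrt Q).
    { apply pow2_le_reg; [apply Rmult_le_pos; apply sqrt_pos|].
      rewrite Rpow_mult_distr, !pow2_sqrt; auto. }
    assert (Hexp : fsum l (fun x => n x * (a x + b x) ^ 2) <= P + 2 * X + Q).
    { unfold P, Q, X. rewrite <- fsum_scal, <- !fsum_plus. apply fsum_le. intros x _.
      pose proof (Rle_abs (a x * b x)). pose proof (n_nonneg x). nra. }
    assert (sqrt P <= sqrt Na) by (apply sqrt_le_1_alt, fsum_le_tsum; auto).
    assert (sqrt Q <= sqrt Nb) by (apply sqrt_le_1_alt, fsum_le_tsum; auto).
    assert ((sqrt P + sqrt Q) ^ 2 <= (sqrt Na + sqrt Nb) ^ 2)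
      by (apply pow_incr; split; [apply Rplus_le_le_0_compat; apply sqrt_pos | lra]).
    assert (E : (sqrt P + sqrt Q) ^ 2 = sqrt P ^ 2 + 2 * (sqrt P * sqrt Q) + sqrt Q ^ 2) by ring.
    rewrite !pow2_sqrt in E by auto. lra. }
  assert (S : in_l2 n (fun x => a x + b x)) by (exists ((sqrt Na + sqrt Nb) ^ 2); auto).
  split; auto.
  rewrite <- (sqrt_pow2 (sqrt Na + sqrt Nb)) by (apply Rplus_le_le_0_compat; apply sqrt_pos).
  apply sqrt_le_1_alt, tsum_le; auto.
Qed.

Lemma l2_sq_ext f g : (forall x, f x ^ 2 = g x ^ 2) ->
  nrm2 n f = nrm2 n g /\ (in_l2 n f <-> in_l2 n g).
Proof.
  intros H. unfold nrm2, in_l2.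
  replace (fun x => n x * g x ^ 2) with (fun x => n x * f x ^ 2); [tauto|].
  apply functional_extensionality. intros x. rewrite H. reflexivity.
Qed.

Lemma l2_reverse_triangle a b : in_l2 n a -> in_l2 n b ->
  in_l2 n (fun x => a x - b x) /\
  Rabs (sqrt (nrm2 n a) - sqrt (nrm2 n b)) <= sqrt (nrm2 n (fun x => a x - b x)).
Proof.
  intros Sa Sb.
  destruct (l2_sq_ext (fun x => - b x) b) as [_ Sneg]; [intros; ring|].
  destruct (l2_triangle a (fun x => - b x) Sa (proj2 Sneg Sb)) as [Sab _].
  destruct (l2_sq_ext (fun x => b x - a x) (fun x => a x - b x)) as [Eba Sba]; [intros; ring|].
  apply Sba in Sab as Sba'.
  split; [exact Sab|].
  destruct (l2_triangle b (fun x => a x - b x) Sb Sab) as [_ H1].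
  destruct (l2_triangle a (fun x => b x - a x) Sa Sba') as [_ H2].
  replace (fun x => b x + (a x - b x)) with a in H1
    by (apply functional_extensionality; intros; ring).
  replace (fun x => a x + (b x - a x)) with b in H2
    by (apply functional_extensionality; intros; ring).
  rewrite Eba in H2. apply Rabs_le. lra.
Qed.

Lemma nrm2_nonneg f : in_l2 n f -> 0 <= nrm2 n f.
Proof. apply tsum_nonneg. Qed.

Lemma nrm2_cv (u : V -> R) (uk : nat -> V -> R) : in_l2 n u -> (forall k, in_l2 n (uk k)) ->
  Un_cv (fun k => nrm2 n (fun x => uk k x - u x)) 0 -> Un_cv (fun k => nrm2 n (uk k)) (nrm2 n u).
Proof.
  intros Su Sk Hcv.
  assert (Hd : Un_cv (fun k => sqrt (nrm2 n (fun x => uk k x - u x))) 0).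
  { rewrite <- sqrt_0. apply continuity_seq; auto using continuity_pt_sqrt, Rle_refl. }
  assert (Hs : Un_cv (fun k => sqrt (nrm2 n (uk k))) (sqrt (nrm2 n u))).
  { intros eps He. destruct (Hd eps He) as [N HN]. exists N. intros k Hk.
    specialize (HN k Hk). unfold R_dist in *. rewrite Rminus_0_r in HN.
    pose proof (proj2 (l2_reverse_triangle (uk k) u (Sk k) Su)).
    pose proof (Rle_abs (sqrt (nrm2 n (fun x => uk k x - u x)))). lra. }
  pose proof (CV_mult _ _ _ _ Hs Hs) as Hsq.
  rewrite sqrt_sqrt in Hsq by auto using nrm2_nonneg.
  apply (Un_cv_ext _ _ (fun k => sqrt_sqrt _ (nrm2_nonneg _ (Sk k)))), Hsq.
Qed.

End L2.

Lemma cv_scal a (u : nat -> R) l : Un_cv u l -> Un_cv (fun k => a * u k) (a * l).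
Proof.
  apply CV_mult. intros eps He. exists 0%nat. intros.
  unfold R_dist. rewrite Rminus_diag, Rabs_R0. lra.
Qed.

Lemma fin_supp_NoDup {V} (u : V -> R) :
  fin_supp u -> exists L, NoDup L /\ forall x, ~ In x L -> u x = 0.
Proof.
  intros [l Hl]. exists (nodup (fun x y => em (x = y)) l). split; [apply NoDup_nodup|].
  intros x Hx. apply Hl. rewrite <- nodup_In. exact Hx.
Qed.

Theorem mainTheorem9 (V : Type) (b : V -> V -> R) (c : V -> R)
  (HV : countably_infinite V) (Hg : is_weighted_graph b c)
  (Hn : forall x, 0 < nw b c x)
  (u : V -> R) (q : R) (Hu : QDom_val b c u q) :
  (1 - sqrt (1 - (alpha b c (fun _ => True)) ^ 2)) * nrm2 (nw b c) u <= q /\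
  q <= (1 + sqrt (1 - (alpha b c (fun _ => True)) ^ 2)) * nrm2 (nw b c) u.
Proof.
  destruct HV as [e _]. destruct Hg as [Hb [Hc [_ [Hsym Hsum]]]].
  destruct Hu as [Su [uk [Hfin [Hcv [_ HQ]]]]].
  set (s := sqrt (1 - alpha b c (fun _ => True) ^ 2)).
  assert (Hnn : forall x, 0 <= nw b c x) by (intros; apply Rlt_le, Hn).
  assert (Hk : forall k,
    (1 - s) * nrm2 (nw b c) (uk k) <= Qmax b c (uk k) <= (1 + s) * nrm2 (nw b c) (uk k)).
  { intros k. destruct (fin_supp_NoDup (uk k) (Hfin k)) as [L [HL Hz]].
    exact (Qmax_bounds_finite b c Hb Hc Hsym Hsum (e 0%nat) Hn L (uk k) HL Hz). }
  assert (HN : Un_cv (fun k => nrm2 (nw b c) (uk k)) (nrm2 (nw b c) u)).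
  { apply nrm2_cv; auto. intros k. destruct (fin_supp_NoDup (uk k) (Hfin k)) as [L [HL Hz]].
    apply (tsum_finite _ L); auto.
    - intros x. apply Rmult_le_pos; auto using pow2_ge_0.
    - intros x Hx. rewrite Hz by auto. ring. }
  split.
  - exact (Rle_cv_lim (fun k => proj1 (Hk k)) (cv_scal _ _ _ HN) HQ).
  - exact (Rle_cv_lim (fun k => proj2 (Hk k)) HQ (cv_scal _ _ _ HN)).
Qed.
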